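(* In the modal logic $\mathrm{SN}$ (defined in the context): if $\vdash B\leftrightarrow C$ then $\vdash A[p/B]\leftrightarrow A[p/C]$ for every formula $A$ and atom $p$, where $A[p/B]$ denotes the result of substituting $B$ for every occurrence of $p$ in $A$.
   Context: $\mathrm{SN}$ is the logic whose formulas are built from propositional atoms $p$, constants $\top,\bot$ and a propositional constant $t$, using $\neg,\wedge,\vee,\to$ and a unary connective $N$ (which may be applied to any formula and iterated). Its theorems ($\vdash A$) are generated by: all classical tautologies; the axioms (K) $N(A\wedge B)\leftrightarrow NA\vee NB$; (F) $\neg NA\leftrightarrow N\neg A$; (C) $A\to NNA$; (A) $t\to(p\to N\neg p)$ for atoms $p$; (T) $t\leftrightarrow Nt$; and the rules modus ponens and (N): from $A$ infer $N\neg A$. *)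

From Stdlib Require Import Arith Bool.

Inductive form : Type :=
| Atom : nat -> form
| Top : form
| Bot : form
| TT : form
| Neg : form -> form
| And : form -> form -> form
| Or : form -> form -> form
| Imp : form -> form -> form
| Nm : form -> form.

Definition Iff (A B : form) : form := And (Imp A B) (Imp B A).

(* Classical propositional evaluation in which atoms, t and every formula
   of the form N A are treated as propositional variables. *)
Fixpoint ceval (va : nat -> bool) (vt : bool) (vn : form -> bool) (A : form) : bool :=
  match A with
  | Atom n => va n
  | Top => true
  | Bot => false
  | TT => vt
  | Neg B => negb (ceval va vt vn B)
  | And B C => ceval va vt vn B && ceval va vt vn C
  | Or B C => ceval va vt vn B || ceval va vt vn C
  | Imp B C => implb (ceval va vt vn B) (ceval va vt vn C)
  | Nm B => vn B
  end.

Definition tautology (A : form) : Prop :=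
  forall va vt vn, ceval va vt vn A = true.

Inductive prov : form -> Prop :=
| ax_taut : forall A, tautology A -> prov A
| ax_K : forall A B, prov (Iff (Nm (And A B)) (Or (Nm A) (Nm B)))
| ax_F : forall A, prov (Iff (Neg (Nm A)) (Nm (Neg A)))
| ax_C : forall A, prov (Imp A (Nm (Nm A)))
| ax_A : forall p, prov (Imp TT (Imp (Atom p) (Nm (Neg (Atom p)))))
| ax_T : prov (Iff TT (Nm TT))
| r_mp : forall A B, prov (Imp A B) -> prov A -> prov B
| r_N : forall A, prov A -> prov (Nm (Neg A)).

Fixpoint subst (p : nat) (B : form) (A : form) : form :=
  match A with
  | Atom n => if Nat.eqb n p then B else Atom n
  | Top => Top
  | Bot => Bot
  | TT => TT
  | Neg C => Neg (subst p B C)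
  | And C D => And (subst p B C) (subst p B D)
  | Or C D => Or (subst p B C) (subst p B D)
  | Imp C D => Imp (subst p B C) (subst p B D)
  | Nm C => Nm (subst p B C)
  end.

(* For the classical connectives the
   congruence step is an instance of a tautology; the only real work is the
   modal step: from ⊢ X → Y the rule (N) gives ⊢ N¬¬(X ∧ ¬Y), and (F), (K)
   turn this into ⊢ NY → NX, so N is antitone and hence respects ↔. *)

Ltac tautology_by_cases :=
  unfold Iff; intros va vt vn; cbn;
  repeat match goal with
  | |- context [ceval va vt vn ?X] => destruct (ceval va vt vn X)
  | |- context [vn ?X] => destruct (vn X)
  | |- context [va ?n] => destruct (va n)
  | |- context [vt] => destruct vt
  end; reflexivity.

Lemma taut_mp (A D : form) : tautology (Imp A D) -> prov A -> prov D.
Proof. intros HAD. exact (r_mp _ _ (ax_taut _ HAD)). Qed.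

Lemma taut_mp2 (A B D : form) :
  tautology (Imp A (Imp B D)) -> prov A -> prov B -> prov D.
Proof. intros HABD HA. exact (r_mp _ _ (r_mp _ _ (ax_taut _ HABD) HA)). Qed.

Lemma taut_mp3 (A B E D : form) :
  tautology (Imp A (Imp B (Imp E D))) -> prov A -> prov B -> prov E -> prov D.
Proof.
  intros HABED HA HB. exact (r_mp _ _ (r_mp _ _ (r_mp _ _ (ax_taut _ HABED) HA) HB)).
Qed.

Lemma Nm_antitone (X Y : form) :
  prov (Imp X Y) -> prov (Imp (Nm Y) (Nm X)).
Proof.
  intros HXY.
  set (Z := And X (Neg Y)).
  assert (HnotZ : prov (Neg Z)).
  { refine (taut_mp _ _ _ HXY). subst Z; tautology_by_cases. }
  assert (HNZ : prov (Nm Z)).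
  { refine (taut_mp3 _ _ _ _ _ (r_N _ HnotZ) (ax_F (Neg Z)) (ax_F Z)).
    tautology_by_cases. }
  refine (taut_mp3 _ _ _ _ _ HNZ (ax_K X (Neg Y)) (ax_F Y)).
  subst Z; tautology_by_cases.
Qed.

Lemma Nm_congr (X Y : form) : prov (Iff X Y) -> prov (Iff (Nm X) (Nm Y)).
Proof.
  intros HXY.
  assert (HNYX : prov (Imp (Nm Y) (Nm X))).
  { apply Nm_antitone. refine (taut_mp _ _ _ HXY). tautology_by_cases. }
  assert (HNXY : prov (Imp (Nm X) (Nm Y))).
  { apply Nm_antitone. refine (taut_mp _ _ _ HXY). tautology_by_cases. }
  refine (taut_mp2 _ _ _ _ HNXY HNYX). tautology_by_cases.
Qed.

Theorem theorem33 (B C : form) (p : nat) (A : form) :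
  prov (Iff B C) -> prov (Iff (subst p B A) (subst p C A)).
Proof.
  intros HBC.
  induction A as [n| | | |A IHA|A1 IHA1 A2 IHA2|A1 IHA1 A2 IHA2|A1 IHA1 A2 IHA2|A IHA];
    cbn.
  - destruct (Nat.eqb n p); [exact HBC|].
    apply ax_taut; tautology_by_cases.
  - apply ax_taut; tautology_by_cases.
  - apply ax_taut; tautology_by_cases.
  - apply ax_taut; tautology_by_cases.
  - refine (taut_mp _ _ _ IHA); tautology_by_cases.
  - refine (taut_mp2 _ _ _ _ IHA1 IHA2); tautology_by_cases.
  - refine (taut_mp2 _ _ _ _ IHA1 IHA2); tautology_by_cases.
  - refine (taut_mp2 _ _ _ _ IHA1 IHA2); tautology_by_cases.
  - exact (Nm_congr _ _ IHA).
Qed.
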